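(* Let $A,B\in\mathscr{Q}$ be disjoint option sets and let $K$ be a coherent set of desirable option sets. Then $(A\cup B)-u\in K$ for all $u\in A$ if and only if $B-u\in K$ for all $u\in A$.
   Context: Let $\mathcal{X}$ be a nonempty set and let $\mathscr{V}$ be the real vector space of all functions $u:\mathcal{X}\to\mathbb{R}$ (options), with pointwise operations. For $u,v\in\mathscr{V}$, $u\le v$ iff $u(x)\le v(x)$ for all $x\in\mathcal{X}$, and $u<v$ iff $u\le v$ and $u\neq v$. Let $\mathscr{V}_{>0}=\{u\in\mathscr{V}:0<u\}$ and $\mathscr{V}^s_{>0}=\{\{u\}:u\in\mathscr{V}_{>0}\}$. Let $\mathscr{Q}$ be the set of all finite subsets of $\mathscr{V}$ (including $\emptyset$). For $A\in\mathscr{Q}$ and $u\in\mathscr{V}$, $A-u=\{v-u:v\in A\}$. For a positive integer $n$, $\mathbb{R}^{n,+}=\{\boldsymbol\lambda\in\mathbb{R}^n:\lambda_j\ge0\ \forall j,\ \sum_j\lambda_j>0\}$, and for $\boldsymbol\lambda\in\mathbb{R}^n$, $\mathbf u=(u_1,\dots,u_n)\in\mathscr{V}^n$, $\boldsymbol\lambda\mathbf u=\sum_{j=1}^n\lambda_ju_j$. A set of desirable option sets is any $K\subseteq\mathscr{Q}$. It is coherent if for all $A,B\in K$: (K0) $A\setminus\{0\}\in K$; (K1) $\{0\}\notin K$; (K2) $\mathscr{V}^s_{>0}\subseteq K$; (K3) $\{\boldsymbol\lambda(\mathbf u)\mathbf u:\mathbf u\in A\times B\}\in K$ for every map $\boldsymbol\lambda:A\times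 B\to\mathbb{R}^{2,+}$; (K4) $A\cup Q\in K$ for all $Q\in\mathscr{Q}$. *)

From HB Require Import structures.
From mathcomp Require Import all_boot all_order all_algebra.
From mathcomp Require Import all_classical all_reals.
Set Implicit Arguments. Unset Strict Implicit. Unset Printing Implicit Defensive.
Import Order.TTheory GRing.Theory Num.Theory.
Local Open Scope classical_set_scope.
Local Open Scope ring_scope.

Definition opt (R : realType) (X : Type) := X -> R.

Definition opt0 (R : realType) (X : Type) : opt R X := fun _ => 0.

Definition ole (R : realType) (X : Type) (u v : opt R X) : Prop :=
  forall x, u x <= v x.
Definition olt (R : realType) (X : Type) (u v : opt R X) : Prop :=
  ole u v /\ u <> v.

Definition shift (R : realType) (X : Type) (A : set (opt R X)) (u : opt R X)
  : set (opt R X) := [set (fun x => v x - u x) | v in A].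

Definition pos2 (R : realType) (l : R * R) : Prop :=
  0 <= l.1 /\ 0 <= l.2 /\ 0 < l.1 + l.2.

(* Coherence of a set of desirable option sets K (K is assumed to consist
   of finite option sets, i.e. K is a subset of Q). *)
Definition coherent (R : realType) (X : Type) (K : set (set (opt R X))) : Prop :=
  (* K0 *) (forall A, K A -> K (A `\ @opt0 R X)) /\
  (* K1 *) ~ K ([set @opt0 R X]) /\
  (* K2 *) (forall u : opt R X, olt (@opt0 R X) u -> K [set u]) /\
  (* K3 *) (forall A B, K A -> K B ->
              forall lam : opt R X * opt R X -> R * R,
              (forall u, A u.1 -> B u.2 -> pos2 (lam u)) ->
              K [set (fun x => (lam u).1 * u.1 x + (lam u).2 * u.2 x)
                | u in A `*` B]) /\
  (* K4 *) (forall A, K A -> forall Q : set (opt R X), finite_set Q -> K (A `|` Q)).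

From HB Require Import structures.
From mathcomp Require Import all_boot all_order all_algebra.
From mathcomp Require Import all_classical all_reals.
Import Order.TTheory GRing.Theory Num.Theory.
Local Open Scope classical_set_scope.
Local Open Scope ring_scope.
Set Implicit Arguments. Unset Strict Implicit. Unset Printing Implicit Defensive.

(* The backward direction is axiom K4: adjoin [A - u] to [B - u].
   For the forward direction we delete the elements of [A] from [A ∪ B] one at
   a time.  For a set [C] of already deleted options and [w ∈ A] consider
       [remaining C w = (((A ∪ B) \ C) - w) \ {0}].
   For [C = ∅] this lies in [K] by the hypothesis and K0.  To delete [v ∈ A],
   combine [remaining C u] and [remaining C v] by K3 with the weights
   (1,1) on pairs whose first component is [v - u], so that
   [(v - u) + (b - v) = b - u], and (1,0) on all other pairs: every resulting
   option lies in [((A ∪ B) \ C \ {v}) - u], which is therefore in [K] by K4;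
   K0 then removes [0].  After deleting all of [A] we are left with [B - u]
   (0 is not in it because [A] and [B] are disjoint). *)

Lemma opt_sub_eq0 (R : realType) (X : Type) (a u : opt R X) :
  (fun x => a x - u x) = @opt0 R X <-> a = u.
Proof.
split=> [h|->]; last by apply/funext => x; rewrite /opt0 subrr.
apply/funext => x; have /eqP := congr1 (fun f => f x) h.
by rewrite /opt0 subr_eq0 => /eqP.
Qed.

Lemma shift_setD0 (R : realType) (X : Type) (B : set (opt R X)) (u : opt R X) :
  ~ B u -> shift B u `\ @opt0 R X = shift B u.
Proof.
move=> nBu; apply/seteqP; split => [y [] //|_ [b Bb <-]]; split; first by exists b.
by move=> /opt_sub_eq0 bu; apply: nBu; rewrite -bu.
Qed.

Section CoherentConsequences.
Variables (R : realType) (X : Type) (K : set (set (opt R X))).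
Hypothesis HK : coherent K.

Lemma coherent_superset (S T : set (opt R X)) :
  K S -> S `<=` T -> finite_set T -> K T.
Proof.
move=> KS ST finT; have [_ [_ [_ [_ K4]]]] := HK.
by rewrite -(setUidr ST); exact: K4.
Qed.

(* K3 with weights (1,0) or (1,1): if for every pair (x, y) from two desirable
   sets either [x] or [x + y] lies in a finite set [T], then [T] is desirable. *)
Lemma coherent_select (S1 S2 T : set (opt R X)) :
  K S1 -> K S2 -> finite_set T ->
  (forall x y, S1 x -> S2 y -> T x \/ T (fun z => x z + y z)) -> K T.
Proof.
move=> KS1 KS2 finT sel; have [_ [_ [_ [K3 _]]]] := HK.
pose lam (p : opt R X * opt R X) : R * R :=
  if pselect (T p.1) then (1, 0) else (1, 1).
have lam_pos p : S1 p.1 -> S2 p.2 -> pos2 (lam p).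
  by move=> _ _; rewrite /lam /pos2; case: pselect => _ /=; rewrite ?addr0 //;
    do !split => //; exact: addr_gt0.
apply: coherent_superset (K3 _ _ KS1 KS2 lam lam_pos) _ finT.
move=> _ [[x y] [/= S1x S2y] <-]; rewrite /lam /=; case: pselect => Tx /=.
  by under eq_fun do rewrite mul1r mul0r addr0.
under eq_fun do rewrite !mul1r.
by case: (sel x y S1x S2y).
Qed.

End CoherentConsequences.

Section Deletion.
Variables (R : realType) (X : Type) (K : set (set (opt R X))).
Hypothesis HK : coherent K.
Variables (A B : set (opt R X)).
Hypotheses (hA : finite_set A) (hB : finite_set B).

Definition remaining (C : set (opt R X)) (w : opt R X) : set (opt R X) :=
  shift ((A `|` B) `\` C) w `\ @opt0 R X.

Lemma remaining_set0 :
  (forall u, A u -> K (shift (A `|` B) u)) ->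
  forall u, A u -> K (remaining set0 u).
Proof. by move=> H u Au; rewrite /remaining setD0; apply: HK.1; exact: H. Qed.

Lemma remaining_step (C : set (opt R X)) (v : opt R X) : A v ->
  (forall w, A w -> K (remaining C w)) ->
  forall u, A u -> K (remaining (C `|` [set v]) u).
Proof.
move=> Av HC u Au; rewrite /remaining -setDDl.
set E := (A `|` B) `\` C.
apply: HK.1; apply: (coherent_select HK (HC u Au) (HC v Av)).
  apply: finite_image; apply: (@sub_finite_set _ _ (A `|` B)).
    by move=> y [[]].
  by rewrite finite_setU.
move=> _ _ [[a Ea <-] nau] [[b Eb <-] nbv].
have [avv|nav] := pselect (a = v); last by left; exists a.
right; exists b; first by split => // /= bv; apply: nbv; apply/opt_sub_eq0.
by apply/funext => z; rewrite avv [RHS]addrC addrA subrK.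
Qed.

Lemma remaining_seq (s : seq (opt R X)) :
  (forall u, A u -> K (shift (A `|` B) u)) ->
  (forall v, v \in s -> A v) -> forall u, A u -> K (remaining [set` s] u).
Proof.
move=> H; elim: s => [|v s IH] sA; first by rewrite set_nil; exact: remaining_set0.
have -> : [set` v :: s] = [set` s] `|` [set v].
  apply/seteqP; split => y /=; rewrite inE.
    by case/orP => [/eqP ->|ys]; [right|left].
  by case => [ys|->]; rewrite ?eqxx ?ys ?orbT.
apply: remaining_step; first by apply: sA; rewrite inE eqxx.
by apply: IH => w ws; apply: sA; rewrite inE ws orbT.
Qed.

End Deletion.

Theorem mainTheorem15 (R : realType) (X : Type) (x0 : X)
  (K : set (set (opt R X)))
  (HKQ : forall A, K A -> finite_set A)
  (HK : coherent K)
  (A B : set (opt R X))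
  (hA : finite_set A) (hB : finite_set B)
  (hAB : A `&` B = set0) :
  (forall u, A u -> K (shift (A `|` B) u)) <->
  (forall u, A u -> K (shift B u)).
Proof.
split=> H u Au; last first.
  have [_ [_ [_ [_ K4]]]] := HK.
  by rewrite /shift image_setU setUC; exact: K4 (H u Au) _ (finite_image _ hA).
have [s As] := (finite_seqP A).1 hA.
have sA v : v \in s -> A v by rewrite As.
have := remaining_seq HK hA hB H sA Au.
have nBu : ~ B u by move=> Bu; suff : (A `&` B) u by rewrite hAB.
by rewrite /remaining -As setUKD ?shift_setD0 ?hAB.
Qed.
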